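(* Let $x>3/4$ be a real number. Then there exists $J_0(x)$ such that for every integer $J\geq\max(3,J_0(x))$ and every $(\mathbf{m},\mathbf{n})=(m_1,\dots,m_J,n_1,\dots,n_J)\in[0,x]^{2J}$ satisfying $$\sum_im_i+\sum_jn_j=x,\qquad m_i\leq x/J\ \text{ for all } i,\qquad n_1\geq n_2\geq\cdots\geq n_J,$$ we have $\eta(\mathbf{m},\mathbf{n})\geq\min\bigl(\frac1{24},\frac{4x-3}{24}\bigr)$, where $$\eta(\mathbf{m},\mathbf{n})=\max\Bigl\{\max_\sigma\min\Bigl(\frac14,\frac\sigma2,\frac{x-\sigma}{2}-\frac14\Bigr),\ \frac18-\max\Bigl(0,\frac12\bigl(1-(n_1+n_2)\bigr)\Bigr)\Bigr\},$$ and $\sigma$ ranges over all sub-sums $\sigma=\sum_{i\in\mathcal{I}}m_i+\sum_{j\in\mathcal{J}}n_j$ for $\mathcal{I},\mathcal{J}$ arbitrary subsets of $\{1,\dots,J\}$. *)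

From mathcomp Require Import all_boot all_order all_algebra.
Set Implicit Arguments. Unset Strict Implicit. Unset Printing Implicit Defensive.
Import Order.TTheory GRing.Theory Num.Theory.
Local Open Scope ring_scope.

Definition subsum (R : realFieldType) (J : nat) (m n : 'I_J -> R)
  (I Js : {set 'I_J}) : R :=
  \sum_(i in I) m i + \sum_(j in Js) n j.

Definition eta_term (R : realFieldType) (x sigma : R) : R :=
  Num.min (1/4) (Num.min (sigma / 2) ((x - sigma) / 2 - 1/4)).

(* max over all sub-sums sigma (the max is over a finite nonempty family,
   seeded with the sigma = 0 term, which belongs to the family) *)
Definition eta_sub (R : realFieldType) (J : nat) (x : R) (m n : 'I_J -> R) : R :=
  \big[Num.max/eta_term x 0]_(IJ : {set 'I_J} * {set 'I_J})
     eta_term x (subsum m n IJ.1 IJ.2).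

(* eta(m,n); requires J >= 2 so that n_1, n_2 exist (indices 0 and 1) *)
Definition eta (R : realFieldType) (J : nat) (x : R) (m n : 'I_J.+2 -> R) : R :=
  Num.max (eta_sub x m n)
          (1/8 - Num.max 0 ((1 - (n ord0 + n (lift ord0 ord0))) / 2)).

From mathcomp Require Import all_boot all_order all_algebra.
From mathcomp Require Import lra.
Import Order.TTheory GRing.Theory Num.Theory.
Local Open Scope ring_scope.

(* The bound holds for every 0 <= c <= 1/8 with 3/4 + 6c <= x, in particular
   for c = min(1/24, (4x-3)/24).  A sub-sum sigma gives eta_term x sigma >= c
   as soon as sigma lies in the window [2c, x - 1/2 - 2c], of width
   L = x - 1/2 - 4c >= x/3.  A smallest sub-family of items, each at most L,
   whose sum reaches 2c lands in that window, since dropping any of its items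
   falls below 2c.
   If n_1 + n_2 >= 3/4 + 2c, the second term of eta already gives c.
   Otherwise the m_i (at most x/J <= x/3) together with n_3, ..., n_J sum to
   x - n_1 - n_2 >= 4c: either all of them are at most L and the window
   argument applies, or some n_j > L lies in the window by itself, because
   n_j <= (n_1 + n_2 + n_j)/3 <= x/3. *)

Section SubsetSumWindow.
Variables (R : realFieldType) (T : finType).

Lemma exists_subset_sum_window (f : T -> R) (A : {set T}) (a b L : R) :
  b <= a + L -> (forall i, i \in A -> f i <= L) ->
  a <= b + \sum_(i in A) f i ->
  exists B : {set T}, a <= b + \sum_(i in B) f i <= a + L.
Proof.
move=> b_le f_le a_le.
pose P (B : {set T}) := (B \subset A) && (a <= b + \sum_(i in B) f i).
have PA : P A by rewrite /P subxx a_le.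
case: (@arg_minnP _ A P (fun B => #|B|) PA) => B /andP [sBA a_leB] minB.
exists B; rewrite a_leB /=.
have [->|[i iB]] := set_0Vmem B; first by rewrite big_set0 addr0.
have not_PBi : ~~ P (B :\ i).
  by apply/negP => /minB; rewrite (cardsD1 i B) iB add1n ltnn.
have sBiA : B :\ i \subset A by apply: subset_trans (subD1set B i) sBA.
move: not_PBi; rewrite /P sBiA -ltNge (big_setD1 i iB) /=.
have := f_le i (subsetP sBA i iB); lra.
Qed.

Lemma exists_subset_sum2_window (f g : T -> R) (A1 A2 : {set T}) (a L : R) :
  0 <= L -> 0 <= a + L ->
  (forall i, i \in A1 -> f i <= L) -> (forall j, j \in A2 -> g j <= L) ->
  a <= \sum_(i in A1) f i + \sum_(j in A2) g j ->
  exists B1 B2 : {set T},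
    a <= \sum_(i in B1) f i + \sum_(j in B2) g j <= a + L.
Proof.
move=> L_ge0 aL_ge0 f_le g_le a_le.
have [g_small|g_large] := leP (\sum_(j in A2) g j) (a + L).
  have [B1 B1_ok] : exists B1 : {set T},
      a <= \sum_(j in A2) g j + \sum_(i in B1) f i <= a + L.
    by apply: exists_subset_sum_window f_le _; rewrite // addrC.
  by exists B1, A2; rewrite addrC.
have [B2 B2_ok] : exists B2 : {set T}, a <= 0 + \sum_(j in B2) g j <= a + L.
  apply: exists_subset_sum_window g_le _ => //; rewrite add0r.
  by apply: le_trans (ltW g_large); rewrite lerDl.
by exists set0, B2; rewrite big_set0.
Qed.

End SubsetSumWindow.

Lemma sum_ord_split2 (V : nmodType) (J : nat) (F : 'I_J.+2 -> V) :
  \sum_j F j = F ord0 + F (lift ord0 ord0) + \sum_(j in [set j : 'I_J.+2 | (1 < j)%N]) F j.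
Proof.
rewrite (bigD1 ord0) //= (bigD1 (lift ord0 ord0)) //= addrA; congr (_ + _).
by apply: eq_bigl => -[[|[|j]] lt_j]; rewrite inE.
Qed.

Lemma eta_ge_window (R : realFieldType) (J : nat) (x c : R) (m n : 'I_J.+2 -> R)
    (B1 B2 : {set 'I_J.+2}) :
  c <= 1/4 -> 2 * c <= subsum m n B1 B2 <= x - 1/2 - 2 * c -> c <= eta x m n.
Proof.
move=> c_le /andP [lo hi]; rewrite /eta le_max; apply/orP; left.
apply: le_trans (le_bigmax _ _ (B1, B2)) => /=.
by rewrite /eta_term !le_min c_le /=; apply/andP; split; lra.
Qed.

Lemma eta_ge_top_pair (R : realFieldType) (J : nat) (x c : R) (m n : 'I_J.+2 -> R) :
  c <= 1/8 -> 3/4 + 2 * c <= n ord0 + n (lift ord0 ord0) -> c <= eta x m n.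
Proof.
move=> c_le pair_ge; rewrite /eta le_max; apply/orP; right.
rewrite lerBrDl -lerBrDr ge_max; apply/andP; split; lra.
Qed.

Lemma eta_ge (R : realFieldType) (J : nat) (x c : R) (m n : 'I_J.+2 -> R) :
  0 <= c -> c <= 1/8 -> 3/4 + 6 * c <= x ->
  (forall i, 0 <= m i) -> (forall j, 0 <= n j) ->
  \sum_i m i + \sum_j n j = x ->
  (forall i, m i <= x / 3) ->
  (forall j k : 'I_J.+2, (j <= k)%N -> n k <= n j) ->
  c <= eta x m n.
Proof.
move=> c_ge0 c_le x_ge m_ge0 n_ge0 sum_x m_le n_noninc.
have sum_n := sum_ord_split2 _ _ n.
set n1 := lift ord0 ord0 in sum_n.
set rest := [set j : 'I_J.+2 | (1 < j)%N] in sum_n.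
have sum_m_ge0 : 0 <= \sum_i m i by apply: sumr_ge0.
have n1_le_n0 : n n1 <= n ord0 by apply: n_noninc.
have [pair_ge|pair_lt] := leP (3/4 + 2 * c) (n ord0 + n n1).
  exact: eta_ge_top_pair.
set L := x - 1/2 - 4 * c.
case: (boolP [exists j, (j \in rest) && (L < n j)]) =>
    [/existsP [j /andP [j_rest L_lt]] | /existsPn rest_small].
  have nj_le_n1 : n j <= n n1.
    by apply: n_noninc; move: j_rest; rewrite inE; apply: ltnW.
  have nj_le_rest : n j <= \sum_(k in rest) n k.
    rewrite (big_setD1 j j_rest) /= lerDl.
    by apply: sumr_ge0 => k _; apply: n_ge0.
  apply: (@eta_ge_window _ _ _ _ _ _ set0 [set j]); first lra.
  rewrite /subsum big_set0 big_set1 add0r.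
  apply/andP; split; rewrite /L in L_lt; lra.
have [B1 [B2 window]] : exists B1 B2 : {set 'I_J.+2},
    2 * c <= \sum_(i in B1) m i + \sum_(j in B2) n j <= 2 * c + L.
  apply: (@exists_subset_sum2_window _ _ m n [set: 'I_J.+2] rest).
  - by rewrite /L; lra.
  - by rewrite /L; lra.
  - by move=> i _; apply: le_trans (m_le i) _; rewrite /L; lra.
  - by move=> j j_rest; move: (rest_small j); rewrite j_rest /= -leNgt.
  - have -> : \sum_(i in [set: 'I_J.+2]) m i = \sum_i m i.
      by apply: eq_bigl => i; rewrite in_setT.
    lra.
apply: (@eta_ge_window _ _ _ _ _ _ B1 B2); first lra.
by rewrite /subsum; move: window; rewrite /L; lra.
Qed.

Theorem proposition4p4 (R : realFieldType) (x : R) (hx : 3/4 < x) :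
  exists J0 : nat, forall J : nat, (3 <= J.+2)%N -> (J0 <= J.+2)%N ->
    forall m n : 'I_J.+2 -> R,
      (forall i, 0 <= m i <= x) -> (forall j, 0 <= n j <= x) ->
      \sum_i m i + \sum_j n j = x ->
      (forall i, m i <= x / (J.+2)%:R) ->
      (forall j k : 'I_J.+2, (j <= k)%N -> n k <= n j) ->
      Num.min (1/24) ((4 * x - 3) / 24) <= eta x m n.
Proof.
exists 0%N => J J_ge3 _ m n m_bnd n_bnd sum_x m_le n_noninc.
set c := Num.min _ _.
have c_le1 : c <= 1/24 by rewrite /c ge_min lexx.
have c_le2 : c <= (4 * x - 3) / 24 by rewrite /c ge_min lexx orbT.
have c_gt0 : 0 < c by rewrite /c lt_min; apply/andP; split; lra.
have x_div_le : x / (J.+2)%:R <= x / 3.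
  rewrite ler_pM2l; last lra.
  by rewrite lef_pV2 ?posrE ?ler_nat //; lra.
apply: eta_ge => //.
- lra.
- lra.
- lra.
- by move=> i; case/andP: (m_bnd i).
- by move=> j; case/andP: (n_bnd j).
- by move=> i; apply: le_trans (m_le i) x_div_le.
Qed.
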